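(* Let $G=(V,E)$ be an $n$-vertex graph of maximum degree $\Delta$ with $V=A\cup B$, $A\cap B=\emptyset$, and let $d\ge1$ be such that every vertex of $A$ has degree at most $d$ in $G$. Suppose that the induced subgraph $G(A)$ is given a proper edge coloring with $O(d)$ colors and the induced subgraph $G(B)$ is given a proper edge coloring with $\Delta+O(d)$ colors (colors taken from a common palette). Then a proper edge coloring of all of $G$ using $\Delta+O(d)$ colors can be computed by a deterministic distributed algorithm in the LOCAL model within $O(d)$ rounds.
   Context: LOCAL model: the input graph is the communication network; each vertex is a processor with a unique ID of $O(\log n)$ bits and unbounded local computation; computation proceeds in synchronous rounds, in each of which every vertex may send a message of arbitrary size to each neighbor; running time is the number of rounds until all vertices terminate. Global parameters ($\Delta$, $d$) are known to all vertices, and each vertex knows whether it is in $A$ or $B$. In an edge coloring, edges sharing an endpoint receive distinct colors, and both endpoints of an edge know its color. *)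

From mathcomp Require Import all_boot.
Set Implicit Arguments. Unset Strict Implicit. Unset Printing Implicit Defensive.

Definition simple_graph (T : finType) (e : rel T) : Prop :=
  symmetric e /\ irreflexive e.

Definition deg (T : finType) (e : rel T) (v : T) : nat := #|[pred w | e v w]|.

Definition max_deg (T : finType) (e : rel T) : nat := \max_(v : T) deg e v.

(* A deterministic LOCAL algorithm in full-information form.  Every vertex
   holds a state of arbitrary type; initially it knows the global parameters
   Delta and d, its own ID, whether it lies in A, and for each incident edge
   the ID of the other endpoint together with the input color of that edge
   (Some c if the edge lies in G(A) or G(B), None if it joins A and B).
   In each round every vertex sends its whole state (messages of arbitrary
   size) to all neighbours and updates its state from the received states.
   After the rounds, [lout s j] is the color the vertex assigns to its edge
   towards the neighbour with ID j. *)
Record LocalAlg := {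
  lstate : Type;
  linit : nat -> nat -> nat -> bool -> seq (nat * option nat) -> lstate;
  lstep : lstate -> seq lstate -> lstate;
  lout : lstate -> nat -> nat
}.

Section Run.
Variables (alg : LocalAlg) (T : finType) (e : rel T) (Delta d : nat)
          (inA : pred T) (id : T -> nat) (col : T -> T -> nat).

Definition in_color (v w : T) : option nat :=
  if inA v == inA w then Some (col v w) else None.

Fixpoint run (r : nat) (v : T) : lstate alg :=
  match r with
  | 0 => @linit alg Delta d (id v) (inA v)
                 [seq (id w, in_color v w) | w <- enum [pred w | e v w]]
  | r'.+1 => @lstep alg (run r' v) [seq run r' w | w <- enum [pred w | e v w]]
  end.

Definition out_color (r : nat) (v w : T) : nat := @lout alg (run r v) (id w).
End Run.

Definition proper_on (T : finType) (e : rel T) (P : pred T)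
    (c : T -> T -> nat) (k : nat) : Prop :=
  (forall u v, P u -> P v -> e u v -> c u v = c v u /\ c u v < k) /\
  (forall u v w, P u -> P v -> P w -> e u v -> e u w -> v != w ->
     c u v != c u w).

From mathcomp Require Import all_boot zify.
Set Implicit Arguments. Unset Strict Implicit. Unset Printing Implicit Defensive.

(* Edges inside A keep their input colour shifted above the threshold
   offsetA = Delta + (cB + 2) d, edges inside B keep their input colour, and
   only the cross edges between A and B receive new colours below offsetA.
   Each a in A ranks its at most d neighbours in B, and the cross edge to its
   k-th one is coloured in round 2k by its endpoint b in B, greedily: the new
   colour avoids the colours b already uses and the cross colours a already
   knows, at most Delta + d colours in all.  A vertex of B colours its edges
   of one round sequentially, so its colours stay distinct; a vertex of A gets
   one new cross edge per phase, and the two rounds of a phase let it learn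
   the colour of the previous one before the next is chosen.  After 2d rounds
   every cross edge is coloured. *)

Definition mex (F : seq nat) : nat :=
  find (fun c => c \notin F) (iota 0 (size F).+1).

Lemma has_notin_iota (F : seq nat) :
  has (fun c => c \notin F) (iota 0 (size F).+1).
Proof.
apply/negPn/negP => /hasPn sub.
suff : (size F).+1 <= size F by rewrite ltnn.
rewrite -[X in X <= _](size_iota 0); apply: uniq_leq_size (iota_uniq _ _) _.
by move=> c /sub /negPn.
Qed.

Lemma mex_le_size (F : seq nat) : mex F <= size F.
Proof. by have := has_notin_iota F; rewrite has_find size_iota. Qed.

Lemma mex_notin (F : seq nat) : mex F \notin F.
Proof.
have := nth_find 0 (has_notin_iota F).
by rewrite nth_iota ?add0n //; apply: mex_le_size.
Qed.

Section GreedyExtension.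
Variables (K : eqType) (I : Type) (key : I -> K) (todo : pred I)
  (forbidden : I -> seq nat) (dom : seq K).

Definition greedy_step (f : K -> option nat) (t : I) : K -> option nat :=
  if todo t && (f (key t) == None) then
    let c := mex (pmap f dom ++ forbidden t) in
    fun k => if k == key t then Some c else f k
  else f.

Definition greedy_extend := foldl greedy_step.

End GreedyExtension.

Lemma greedy_extend_map (K : eqType) (I J : Type) (g : J -> I) (key : I -> K)
    (todo : pred I) (forbidden : I -> seq nat) dom f ts :
  greedy_extend key todo forbidden dom f (map g ts) =
  greedy_extend (key \o g) (todo \o g) (forbidden \o g) dom f ts.
Proof. by elim: ts f => //= t ts IH f; rewrite IH. Qed.

Lemma eq_greedy_extend (K : eqType) (I : Type) (key1 key2 : I -> K)
    (todo1 todo2 : pred I) (forbidden1 forbidden2 : I -> seq nat) dom f ts :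
  key1 =1 key2 -> todo1 =1 todo2 -> forbidden1 =1 forbidden2 ->
  greedy_extend key1 todo1 forbidden1 dom f ts =
  greedy_extend key2 todo2 forbidden2 dom f ts.
Proof.
move=> ekey etodo eforb; elim: ts f => //= t ts IH f.
by rewrite IH {1}/greedy_step ekey etodo eforb.
Qed.

Definition partial_injective (K : eqType) (dom : seq K) (f : K -> option nat) :=
  forall k1 k2 c, k1 \in dom -> k2 \in dom -> f k1 = Some c -> f k2 = Some c -> k1 = k2.

Section GreedyExtensionTheory.
Variables (K I : eqType) (key : I -> K) (todo : pred I)
  (forbidden : I -> seq nat) (dom : seq K).
Local Notation step := (greedy_step key todo forbidden dom).
Local Notation extend := (greedy_extend key todo forbidden dom).

Lemma greedy_step_some f t k c : f k = Some c -> step f t k = Some c.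
Proof.
rewrite /greedy_step; case: ifP => // /andP[_ /eqP fk_None] fk.
by case: eqP => // ek; rewrite -ek fk in fk_None.
Qed.

Lemma greedy_extend_some f ts k c : f k = Some c -> extend f ts k = Some c.
Proof. by elim: ts f => //= t ts IH f fk; apply/IH/greedy_step_some. Qed.

Lemma greedy_step_new f t k : step f t k != f k ->
  [/\ key t = k, todo t & step f t k = Some (mex (pmap f dom ++ forbidden t))].
Proof.
rewrite /greedy_step; case: ifP => [/andP[todo_t _]|]; last by rewrite eqxx.
by have [->|ne] := eqVneq k (key t); rewrite ?eqxx // (negbTE ne) eqxx.
Qed.

Lemma greedy_extend_new f ts k : extend f ts k != f k ->
  exists2 t, t \in ts & [/\ key t = k, todo t &
    exists2 c, extend f ts k = Some c &
      c \notin forbidden t /\ c <= size dom + size (forbidden t)].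
Proof.
elim: ts f => [|t ts IH] f /=; first by rewrite eqxx.
have [same | new_t _] := eqVneq (step f t k) (f k).
  by rewrite -same => /IH[t' t'_ts rest]; exists t'; rewrite // in_cons t'_ts orbT.
exists t; first exact: mem_head.
have [key_t todo_t step_k] := greedy_step_new new_t.
split=> //; exists (mex (pmap f dom ++ forbidden t)).
  exact: greedy_extend_some.
have := mex_notin (pmap f dom ++ forbidden t); rewrite mem_cat negb_or => /andP[_ ->].
split=> //; apply: leq_trans (mex_le_size _) _.
by rewrite size_cat leq_add2r size_pmap count_size.
Qed.

Lemma greedy_extend_todo f ts t : t \in ts -> todo t -> extend f ts (key t) != None.
Proof.
elim: ts f => //= t' ts IH f; rewrite in_cons => /orP[/eqP<- todo_t | /IH]; last exact.
suff [c stepc] : exists c, step f t (key t) = Some c by rewrite (greedy_extend_some ts stepc).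
rewrite /greedy_step todo_t; case fk: (f (key t)) => [c|] /=; first by exists c.
by eexists; rewrite eqxx.
Qed.

Lemma greedy_step_partial_injective f t :
  partial_injective dom f -> partial_injective dom (step f t).
Proof.
rewrite /greedy_step; case: ifP => // _ f_inj k1 k2 c k1_dom k2_dom.
set c0 := mex _; have := mex_notin (pmap f dom ++ forbidden t); rewrite -/c0.
rewrite mem_cat negb_or => /andP[c0_new _].
have fresh k : k \in dom -> f k = Some c0 -> False.
  by move=> k_dom fk; move: c0_new; rewrite mem_pmap -fk (map_f f k_dom).
have [-> | k1t] := eqVneq k1 (key t); have [-> | k2t] := eqVneq k2 (key t);
  rewrite ?eqxx ?(negbTE k1t) ?(negbTE k2t) //.
- by move=> [<-] /(fresh _ k2_dom).
- by move=> + [c0c]; rewrite -c0c => /(fresh _ k1_dom).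
- exact: f_inj.
Qed.

Lemma greedy_extend_partial_injective f ts :
  partial_injective dom f -> partial_injective dom (extend f ts).
Proof. by elim: ts f => //= t ts IH f /(@greedy_step_partial_injective _ t)/IH. Qed.

End GreedyExtensionTheory.

(* At a vertex of B, [ns_colors] holds the colours it has fixed for its edges,
   indexed by neighbour ID; at a vertex of A, it holds the colours that its
   B-neighbours had fixed for the cross edges one round earlier. *)
Record node_state := NodeState {
  ns_Delta : nat; ns_d : nat; ns_id : nat; ns_inA : bool;
  ns_input : seq (nat * option nat); ns_round : nat;
  ns_colors : nat -> option nat }.

Fixpoint lookup (j : nat) (s : seq (nat * option nat)) : option nat :=
  if s is (k, o) :: s' then (if k == j then o else lookup j s') else None.

Definition nbr_ids (s : node_state) : seq nat := map fst (ns_input s).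

Definition cross_ids (s : node_state) : seq nat :=
  [seq x.1 | x <- ns_input s & x.2 == None].

Definition scheduled (s t : node_state) : bool :=
  ns_inA t && ((index (ns_id s) (cross_ids t)).*2 == ns_round s).

Definition known_colors (t : node_state) : seq nat := pmap (ns_colors t) (nbr_ids t).

Definition copy_colors (s : node_state) (ns : seq node_state) (j : nat) : option nat :=
  lookup j [seq (ns_id t, if ns_inA t then None else ns_colors t (ns_id s)) | t <- ns].

Definition step (s : node_state) (ns : seq node_state) : node_state :=
  NodeState (ns_Delta s) (ns_d s) (ns_id s) (ns_inA s) (ns_input s) (ns_round s).+1
    (if ns_inA s then copy_colors s ns
     else greedy_extend ns_id (scheduled s) known_colors (nbr_ids s) (ns_colors s) ns).

Definition output (cB : nat) (s : node_state) (j : nat) : nat :=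
  match ns_inA s, lookup j (ns_input s) with
  | true, Some c => ns_Delta s + (cB + 2) * ns_d s + c
  | _, _ => odflt 0 (ns_colors s j)
  end.

Definition edge_coloring_alg (cB : nat) : LocalAlg := {|
  lstate := node_state;
  linit := fun Delta d i a nb => NodeState Delta d i a nb 0 (lookup ^~ nb);
  lstep := step;
  lout := output cB |}.

Section Correctness.
Variables (cB : nat) (T : finType) (e : rel T) (Delta d : nat) (inA : pred T)
  (id : T -> nat) (col : T -> T -> nat).
Hypotheses (e_simple : simple_graph e) (max_deg_e : max_deg e = Delta)
  (d_pos : 1 <= d) (deg_A : forall v, inA v -> deg e v <= d)
  (id_inj : injective id) (col_B : proper_on e (predC inA) col (Delta + cB * d)).

Local Notation state := (run (edge_coloring_alg cB) e Delta d inA id col).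
Local Notation colors r v := (ns_colors (state r v)).

Definition nbrs (v : T) : seq T := enum [pred w | e v w].
Definition input_nbrs (v : T) := [seq (id w, in_color inA col v w) | w <- nbrs v].
Definition cross_nbrs (a : T) : seq T := [seq b <- nbrs a | ~~ inA b].
Definition rank (a b : T) : nat := index b (cross_nbrs a).
Definition offsetA := Delta + (cB + 2) * d.

Lemma mem_nbrs v w : (w \in nbrs v) = e v w.
Proof. by rewrite mem_enum. Qed.

Lemma nbrs_sym v w : (w \in nbrs v) = (v \in nbrs w).
Proof. by rewrite !mem_nbrs; case: e_simple => e_sym _; rewrite e_sym. Qed.

Lemma size_nbrs v : size (nbrs v) = deg e v.
Proof. by rewrite /deg cardE. Qed.

Lemma deg_le_Delta v : deg e v <= Delta.
Proof. by rewrite -max_deg_e; apply: (@leq_bigmax _ (deg e)). Qed.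

Lemma mem_cross_nbrs a b : (b \in cross_nbrs a) = (b \in nbrs a) && ~~ inA b.
Proof. by rewrite mem_filter andbC. Qed.

Lemma rank_inj a b1 b2 :
  b1 \in cross_nbrs a -> b2 \in cross_nbrs a -> rank a b1 = rank a b2 -> b1 = b2.
Proof. by move=> b1_cross b2_cross /(congr1 (nth b1 (cross_nbrs a))); rewrite !nth_index. Qed.

Lemma rank_lt a b : inA a -> b \in cross_nbrs a -> rank a b < d.
Proof.
move=> a_A b_cross; rewrite /rank -index_mem in b_cross.
apply: leq_trans b_cross (leq_trans _ (deg_A a_A)).
by rewrite -size_nbrs size_filter count_size.
Qed.

Lemma lookup_map (f : T -> option nat) s w :
  lookup (id w) [seq (id x, f x) | x <- s] = if w \in s then f w else None.
Proof.
elim: s => //= x s ->; rewrite in_cons (inj_eq id_inj) eq_sym.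
by case: eqP => [->|].
Qed.

Lemma state_eta r v : state r v =
  NodeState Delta d (id v) (inA v) (input_nbrs v) r (colors r v).
Proof. by elim: r => //= r ->. Qed.

Lemma id_state r v : ns_id (state r v) = id v.
Proof. by rewrite state_eta. Qed.

Lemma inA_state r v : ns_inA (state r v) = inA v.
Proof. by rewrite state_eta. Qed.

Lemma state_succ r v : state r.+1 v = step (state r v) (map (state r) (nbrs v)).
Proof. by []. Qed.

Definition scheduled_at (r : nat) (b w : T) : bool := inA w && ((rank w b).*2 == r).
Definition known_at (r : nat) (a : T) : seq nat := pmap (colors r a) (map id (nbrs a)).

Lemma colors0 v w : colors 0 v (id w) = if w \in nbrs v then in_color inA col v w else None.
Proof. exact: lookup_map. Qed.

Lemma colorsS_A r a w : inA a ->
  colors r.+1 a (id w) = if (w \in nbrs a) && ~~ inA w then colors r w (id a) else None.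
Proof.
move=> a_A; rewrite state_succ /step [state r a]state_eta /= a_A /copy_colors -map_comp.
rewrite (eq_map (g := fun x => (id x, if inA x then None else colors r x (id a)))).
  by rewrite lookup_map; case: (w \in nbrs a); case: (inA w).
by move=> x; rewrite /= id_state inA_state.
Qed.

Lemma cross_ids_state r a : inA a -> cross_ids (state r a) = map id (cross_nbrs a).
Proof.
move=> a_A; rewrite /cross_ids state_eta /= /input_nbrs filter_map -map_comp.
congr map; apply: eq_filter => w /=.
by rewrite /in_color a_A; case: (inA w).
Qed.

Lemma colorsS_B r b : ~~ inA b -> colors r.+1 b =
  greedy_extend id (scheduled_at r b) (known_at r) (map id (nbrs b)) (colors r b) (nbrs b).
Proof.
move=> b_B; rewrite state_succ /step [state r b]state_eta /= (negbTE b_B).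
rewrite greedy_extend_map /nbr_ids /input_nbrs -map_comp.
apply: eq_greedy_extend => w /=.
- exact: id_state.
- rewrite /scheduled /scheduled_at inA_state; case w_A: (inA w) => //=.
  by rewrite cross_ids_state // index_map.
- by rewrite /known_colors /known_at /nbr_ids [state r w]state_eta /= /input_nbrs -map_comp.
Qed.

Lemma colors_stable r b j c : ~~ inA b ->
  colors r b j = Some c -> colors r.+1 b j = Some c.
Proof. by move=> b_B; rewrite colorsS_B //; apply: greedy_extend_some. Qed.

Lemma colors_stable_le r r' b j c : r <= r' -> ~~ inA b ->
  colors r b j = Some c -> colors r' b j = Some c.
Proof.
move/subnK <-; move=> b_B; elim: (r' - r) => //= k IH /IH.
exact: colors_stable.
Qed.

Lemma size_known_at r a : size (known_at r a) <= deg e a.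
Proof. by rewrite size_pmap -size_nbrs -(size_map id) count_size. Qed.

Lemma colorsS_B_cases r b w : ~~ inA b -> w \in nbrs b ->
  colors r.+1 b (id w) = colors r b (id w) \/
  scheduled_at r b w /\ exists2 c, colors r.+1 b (id w) = Some c &
    c \notin known_at r w /\ c <= deg e b + deg e w.
Proof.
move=> b_B bw.
have [-> | new] := eqVneq (colors r.+1 b (id w)) (colors r b (id w)); first by left.
right; move: new; rewrite colorsS_B //.
case/greedy_extend_new=> t _ [/id_inj-> sch [c -> [c_new c_le]]].
split=> //; exists c => //; split=> //; apply: leq_trans c_le _.
by rewrite size_map size_nbrs leq_add2l size_known_at.
Qed.

Lemma colorsS_B_scheduled r b w : ~~ inA b -> w \in nbrs b ->
  scheduled_at r b w -> colors r.+1 b (id w) != None.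
Proof. by move=> b_B bw sch; rewrite colorsS_B //; apply: greedy_extend_todo. Qed.

Definition B_invariant (r : nat) := [/\
  (forall b w, ~~ inA b -> w \in nbrs b -> ~~ inA w -> colors r b (id w) = Some (col b w)),
  (forall b a, ~~ inA b -> a \in nbrs b -> inA a ->
     (colors r b (id a) != None) = ((rank a b).*2 < r)),
  (forall b a c, ~~ inA b -> a \in nbrs b -> inA a -> colors r b (id a) = Some c -> c < offsetA)
& (forall b, ~~ inA b -> partial_injective (map id (nbrs b)) (colors r b))].

Lemma B_invariant0 : B_invariant 0.
Proof.
split.
- by move=> b w b_B bw w_B; rewrite colors0 bw /in_color (negbTE b_B) (negbTE w_B).
- by move=> b a b_B ba a_A; rewrite colors0 ba /in_color (negbTE b_B) a_A.
- by move=> b a c b_B ba a_A; rewrite colors0 ba /in_color (negbTE b_B) a_A.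
move=> b b_B _ _ c /mapP[w1 bw1 ->] /mapP[w2 bw2 ->].
rewrite !colors0 bw1 bw2 /in_color.
case: ifP => // /eqP w1_B [<-]; case: ifP => // /eqP w2_B [/eqP same].
suff -> : w1 = w2 by []; apply/eqP; apply: contraTT same => ne.
case: col_B => _ col_proper.
by apply: col_proper; rewrite //= -?w1_B -?w2_B -?mem_nbrs // eq_sym.
Qed.

Lemma B_invariantS r : B_invariant r -> B_invariant r.+1.
Proof.
case=> B_col cross_done cross_lt inj; split.
- move=> b w b_B bw w_B; have [-> | [/andP[w_A _] _]] := colorsS_B_cases r b_B bw.
    exact: B_col.
  by rewrite w_A in w_B.
- move=> b a b_B ba a_A; have [sch | unsch] := boolP (scheduled_at r b a).
    move: (sch); rewrite /scheduled_at a_A /= => /eqP->.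
    by rewrite ltnSn; apply: colorsS_B_scheduled.
  have [-> | [sch _]] := colorsS_B_cases r b_B ba; last by rewrite sch in unsch.
  rewrite ltnS leq_eqVlt; move: unsch; rewrite /scheduled_at a_A /= => /negbTE->.
  exact: cross_done.
- move=> b a c b_B ba a_A.
  have [-> | [_ [c' -> [_ c_le]] [<-]]] := colorsS_B_cases r b_B ba; first exact: cross_lt.
  have := deg_le_Delta b; have := deg_A a_A; rewrite /offsetA; lia.
- by move=> b b_B; rewrite colorsS_B //; apply/greedy_extend_partial_injective/inj.
Qed.

Lemma B_invariant_holds r : B_invariant r.
Proof. by elim: r => [|r]; [apply: B_invariant0 | apply: B_invariantS]. Qed.

Lemma colors0_cross a b : inA a -> b \in cross_nbrs a -> colors 0 b (id a) = None.
Proof.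
move=> a_A; rewrite mem_cross_nbrs => /andP[_ b_B].
by rewrite colors0 /in_color a_A (negbTE b_B); case: ifP.
Qed.

Lemma fresh_cross_color r a b1 b2 c : inA a ->
  b1 \in cross_nbrs a -> b2 \in cross_nbrs a ->
  colors r.+1 b2 (id a) != colors r b2 (id a) ->
  colors r.+1 b1 (id a) = Some c -> colors r.+1 b2 (id a) = Some c -> b1 = b2.
Proof.
move=> a_A b1_cross b2_cross; move: (b1_cross) (b2_cross).
rewrite !mem_cross_nbrs => /andP[ab1 b1_B] /andP[ab2 b2_B].
have b1a : a \in nbrs b1 by rewrite nbrs_sym.
have b2a : a \in nbrs b2 by rewrite nbrs_sym.
case: (colorsS_B_cases r b2_B b2a) => [-> | [sch2 [c2 -> [c2_new _]]] _ c1_eq [c2c]].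
  by rewrite eqxx.
move: sch2; rewrite {c2}c2c in c2_new; rewrite /scheduled_at a_A => /eqP rank2.
have [same1 | [sch1 _]] := colorsS_B_cases r b1_B b1a; last first.
  move: sch1; rewrite /scheduled_at a_A -rank2 => /eqP/double_inj.
  exact: rank_inj.
(* b1 was coloured at least one phase before b2, so b2 saw its colour in the
   state of a. *)
have c1_old : colors r b1 (id a) = Some c by rewrite -same1.
have [_ cross_done _ _] := B_invariant_holds r.
have rank1 : (rank a b1).*2 < r by rewrite -cross_done // c1_old.
have [r' r_eq] : exists r', r = r'.+1 by exists r.-1; lia.
have [_ cross_done' _ _] := B_invariant_holds r'.
have : colors r' b1 (id a) != None by rewrite cross_done' //; lia.
case c1_older: (colors r' b1 (id a)) => [c'|] // _.
have := colors_stable b1_B c1_older; rewrite -r_eq c1_old => -[c'c].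
have a_knows : colors r a (id b1) = Some c.
  by rewrite r_eq colorsS_A // ab1 b1_B c1_older c'c.
by case/negP: c2_new; rewrite mem_pmap -a_knows !map_f.
Qed.

Lemma cross_colors_injective_at_A r a b1 b2 c : inA a ->
  b1 \in cross_nbrs a -> b2 \in cross_nbrs a ->
  colors r b1 (id a) = Some c -> colors r b2 (id a) = Some c -> b1 = b2.
Proof.
move=> a_A b1_cross b2_cross; elim: r => [|r IH].
  by rewrite colors0_cross.
have [same2 | new2] := eqVneq (colors r.+1 b2 (id a)) (colors r b2 (id a)); last first.
  exact: fresh_cross_color.
have [same1 | new1] := eqVneq (colors r.+1 b1 (id a)) (colors r b1 (id a)); last first.
  by move=> c1 c2; rewrite (fresh_cross_color a_A b2_cross b1_cross new1 c2 c1).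
by rewrite same1 same2; apply: IH.
Qed.

Lemma cross_colored_before_end b a : ~~ inA b -> a \in nbrs b -> inA a ->
  exists2 c, colors (2 * d).-1 b (id a) = Some c & c < offsetA.
Proof.
move=> b_B ba a_A; have [_ cross_done cross_lt _] := B_invariant_holds (2 * d).-1.
have : colors (2 * d).-1 b (id a) != None.
  have : rank a b < d by apply: rank_lt; rewrite // mem_cross_nbrs -nbrs_sym ba.
  rewrite cross_done //; lia.
case c_eq: (colors _ b (id a)) => [c|] // _; exists c => //.
exact: cross_lt c_eq.
Qed.

Local Notation out := (out_color (edge_coloring_alg cB) e Delta d inA id col (2 * d)).

Lemma out_colorE u v : v \in nbrs u ->
  out u v = if inA u && inA v then offsetA + col u v else odflt 0 (colors (2 * d) u (id v)).
Proof.
move=> uv; rewrite /out_color /= [state _ u]state_eta /output /= /input_nbrs lookup_map uv.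
by rewrite /in_color /offsetA; case: (inA u); case: (inA v).
Qed.

Lemma out_color_B u v : ~~ inA u -> v \in nbrs u ->
  colors (2 * d) u (id v) = Some (out u v).
Proof.
move=> u_B uv; rewrite out_colorE // (negbTE u_B) /=.
suff [c ->] : exists c, colors (2 * d) u (id v) = Some c by [].
have [v_A | v_B] := boolP (inA v).
  have [c c_eq _] := cross_colored_before_end u_B uv v_A.
  by exists c; apply: colors_stable_le c_eq; rewrite ?leq_pred.
have [B_col _ _ _] := B_invariant_holds (2 * d).
by exists (col u v); apply: B_col.
Qed.

Lemma out_color_AB a b : inA a -> ~~ inA b -> b \in nbrs a ->
  colors (2 * d).-1 b (id a) = Some (out a b) /\ out a b = out b a /\ out a b < offsetA.
Proof.
move=> a_A b_B ab; have ba : a \in nbrs b by rewrite -nbrs_sym.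
have [c c_eq c_lt] := cross_colored_before_end b_B ba a_A.
have out_ab : out a b = c.
  rewrite out_colorE // a_A (negbTE b_B) /= -[2 * d](@prednK _); last lia.
  by rewrite colorsS_A // ab b_B c_eq.
suff out_ba : out b a = c by rewrite out_ab out_ba c_eq.
by have := colors_stable_le (leq_pred (2 * d)) b_B c_eq; rewrite out_color_B // => -[].
Qed.

Variable cA : nat.
Hypothesis col_A : proper_on e inA col (cA * d).

Lemma out_color_B_B u v : ~~ inA u -> ~~ inA v -> v \in nbrs u -> out u v = col u v.
Proof.
move=> u_B v_B uv; have [B_col _ _ _] := B_invariant_holds (2 * d).
by move: (B_col u v u_B uv v_B); rewrite out_color_B // => -[].
Qed.

Lemma out_color_sym_lt u v : e u v ->
  out u v = out v u /\ out u v < Delta + (cB + 2 + cA) * d.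
Proof.
move=> e_uv; have e_vu : e v u by case: e_simple => e_sym _; rewrite e_sym.
have uv : v \in nbrs u by rewrite mem_nbrs.
have vu : u \in nbrs v by rewrite mem_nbrs.
have low c : c < offsetA -> c < Delta + (cB + 2 + cA) * d by rewrite /offsetA; lia.
case u_A: (inA u); case v_A: (inA v).
- rewrite !out_colorE // u_A v_A /=; case: col_A => col_sym _.
  by case: (col_sym u v u_A v_A e_uv) => -> col_lt; split=> //; rewrite /offsetA; lia.
- by have [_ []] := out_color_AB u_A (negbT v_A) uv; split=> //; apply: low.
- by have [_ [-> out_lt]] := out_color_AB v_A (negbT u_A) vu; split=> //; apply: low.
rewrite !out_color_B_B ?u_A ?v_A //; case: col_B => col_sym _.
by case: (col_sym u v) => //=; rewrite ?u_A ?v_A // => -> col_lt; split=> //; lia.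
Qed.

Lemma out_color_proper u v w : e u v -> e u w -> v != w -> out u v != out u w.
Proof.
rewrite -!mem_nbrs => uv uw; apply: contraNneq => out_eq; apply/eqP.
have [u_A | u_B] := boolP (inA u); last first.
  have [_ _ _ B_inj] := B_invariant_holds (2 * d).
  apply: id_inj; apply: (B_inj u u_B _ _ (out u v)); rewrite ?map_f ?out_color_B //.
  by rewrite out_eq.
have AA_ge x : inA x -> x \in nbrs u -> offsetA <= out u x.
  by move=> x_A ux; rewrite out_colorE // u_A x_A leq_addr.
case v_A: (inA v); case w_A: (inA w).
- move: out_eq; rewrite !out_colorE // u_A v_A w_A /= => /addnI /eqP.
  by case: col_A => _ col_inj; apply: contraTeq; apply: col_inj; rewrite -?mem_nbrs.
- have [_ [_ out_lt]] := out_color_AB u_A (negbT w_A) uw.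
  by have := AA_ge v v_A uv; rewrite out_eq; lia.
- have [_ [_ out_lt]] := out_color_AB u_A (negbT v_A) uv.
  by have := AA_ge w w_A uw; rewrite -out_eq; lia.
have [v_col _] := out_color_AB u_A (negbT v_A) uv.
have [w_col _] := out_color_AB u_A (negbT w_A) uw.
apply: (cross_colors_injective_at_A u_A _ _ v_col);
  by rewrite ?out_eq ?mem_cross_nbrs ?uv ?uw ?v_A ?w_A.
Qed.
End Correctness.

Theorem mainTheorem11 :
  forall cA cB : nat,
  exists (Ccol Crounds : nat) (alg : LocalAlg),
  forall (T : finType) (e : rel T) (Delta d : nat) (inA : pred T)
         (id : T -> nat) (col : T -> T -> nat),
    simple_graph e ->
    max_deg e = Delta ->
    1 <= d ->
    (forall v, inA v -> deg e v <= d) ->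
    injective id ->
    proper_on e inA col (cA * d) ->
    proper_on e (predC inA) col (Delta + cB * d) ->
    let c := out_color alg e Delta d inA id col (Crounds * d) in
    (forall u v, e u v -> c u v = c v u /\ c u v < Delta + Ccol * d) /\
    (forall u v w, e u v -> e u w -> v != w -> c u v != c u w).
Proof.
move=> cA cB; exists (cB + 2 + cA), 2, (edge_coloring_alg cB).
move=> T e Delta d inA id col e_simple max_deg_e d_pos deg_A id_inj col_A col_B /=.
split=> [u v | u v w].
- exact: (out_color_sym_lt e_simple max_deg_e d_pos deg_A id_inj col_B col_A).
- exact: (out_color_proper e_simple max_deg_e d_pos deg_A id_inj col_B col_A).
Qed.
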